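(* Let $\pi$ be a probability measure on $\mathcal{B}_n=\{0,1\}^n$ and $L$ the generator of a $\pi$-reversible flip-swap random walk on $\mathcal{B}_n$ which is $R$-stable for some $R\ge0$. Then for any nonempty $A\subset\mathcal{B}_n$ and every $x\in\mathrm{supp}\,\pi$, \[ \Gamma_+\big(d_T^2(\cdot,A)\big)(x)\le8R\rho(L)\,d_T^2(x,A). \] Moreover, for all $x,y\in\mathcal{B}_n$ and any nonempty $A\subset\mathcal{B}_n$, $d_T^2(x,A)-d_T^2(y,A)\le d_H(x,y)$.
   Context: A generator on $\mathcal{B}_n$ is a real matrix $L=(L(x,y))$ with $L(x,y)\ge0$ for $x\ne y$ and zero row sums; $\pi$-reversible: $\pi(x)L(x,y)=\pi(y)L(y,x)$. With $(Lg)(x)=\sum_yL(x,y)g(y)$, $\mathcal{E}(f,g)=-\sum_x\pi(x)f(x)(Lg)(x)$, $\mathrm{Ent}_\pi(f)=\pi(f\log f)-\pi(f)\log\pi(f)$, $\rho(L)$ is the largest constant with $\rho(L)\mathrm{Ent}_\pi(f)\le\mathcal{E}(f,\log f)$ for all non-constant $f\ge0$. Flip-swap: $L(x,y)>0$, $x\ne y$, implies $y$ differs from $x$ by flipping one coordinate or swapping two unequal coordinates. $R$-stable: $\rho(L)>0$ and $\max_{x\in\mathrm{supp}\,\pi,\,i\in[n]}\sum_{y:y_i\ne x_i}L(x,y)\le R\rho(L)$. $\Gamma_+(g)(x)=\sum_y(g(x)-g(y))_+^2L(x,y)$. $d_H(x,y)=\sum_i\mathbf{1}\{x_i\ne y_i\}$;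 $d_\alpha(x,y)=\sum_i\alpha_i\mathbf{1}\{x_i\ne y_i\}$, $d_\alpha(x,A)=\min_{y\in A}d_\alpha(x,y)$, $d_T(x,A)=\sup\{d_\alpha(x,A):\alpha\in[0,\infty)^n,|\alpha|\le1\}$. *)

From HB Require Import structures.
From mathcomp Require Import all_boot all_order all_algebra.
From mathcomp Require Import all_classical all_reals.
From mathcomp Require Import exp.
Set Implicit Arguments. Unset Strict Implicit. Unset Printing Implicit Defensive.
Import Order.TTheory GRing.Theory Num.Theory.
Local Open Scope ring_scope.
Local Open Scope classical_set_scope.

Notation cube n := {ffun 'I_n -> bool}.

Section Defs.
Variables (R : realType) (n : nat).
Implicit Types (pi : cube n -> R) (L : cube n -> cube n -> R) (f g : cube n -> R).

Definition is_prob pi := (forall x, 0 <= pi x) /\ \sum_x pi x = 1.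

Definition is_generator L :=
  (forall x y, x != y -> 0 <= L x y) /\ (forall x, \sum_y L x y = 0).

Definition reversible pi L := forall x y, pi x * L x y = pi y * L y x.

Definition genapp L g (x : cube n) : R := \sum_y L x y * g y.

Definition expect pi g : R := \sum_x pi x * g x.

Definition dirichlet pi L f g : R := - \sum_x pi x * f x * genapp L g x.

Definition Ent pi f : R :=
  expect pi (fun x => f x * ln (f x)) - expect pi f * ln (expect pi f).

Definition mlsi_const pi L : R :=
  sup [set c : R | forall f : cube n -> R, (forall x, 0 < f x) ->
        (exists x y, f x != f y) ->
        c * Ent pi f <= dirichlet pi L f (fun x => ln (f x))].

Definition flip (x : cube n) (i : 'I_n) : cube n :=
  [ffun k => if k == i then ~~ x k else x k].

Definition swap (x : cube n) (i j : 'I_n) : cube n :=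
  [ffun k => if k == i then x j else if k == j then x i else x k].

Definition flip_swap L :=
  forall x y, x != y -> 0 < L x y ->
    (exists i, y = flip x i) \/ (exists i j, x i != x j /\ y = swap x i j).

Definition R_stable pi L (Rc : R) :=
  0 < mlsi_const pi L /\
  forall x, 0 < pi x -> forall i : 'I_n,
    \sum_(y : cube n | y i != x i) L x y <= Rc * mlsi_const pi L.

Definition Gamma_plus L g (x : cube n) : R :=
  \sum_y (Num.max (g x - g y) 0) ^+ 2 * L x y.

Definition d_H (x y : cube n) : nat := \sum_i (x i != y i).

Definition d_alpha (a : 'I_n -> R) (x y : cube n) : R :=
  \sum_i a i * (x i != y i)%:R.

Definition d_alpha_set (a : 'I_n -> R) (x : cube n) (A : {set cube n}) : R :=
  inf [set d_alpha a x y | y in [set y | y \in A]].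

Definition d_T (x : cube n) (A : {set cube n}) : R :=
  sup [set d_alpha_set a x A | a in
        [set a : 'I_n -> R | (forall i, 0 <= a i) /\
                             Num.sqrt (\sum_i a i ^+ 2) <= 1]].
End Defs.
Arguments d_T {R n} x A.

From HB Require Import structures.
From mathcomp Require Import all_boot all_order all_algebra.
From mathcomp Require Import all_classical all_reals.
From mathcomp Require Import ring lra.
Set Implicit Arguments. Unset Strict Implicit. Unset Printing Implicit Defensive.
Import Order.TTheory GRing.Theory Num.Theory.
Local Open Scope ring_scope.

(* Fix an admissible weight a (a >= 0, |a| <= 1).  Comparing coordinatewise,
   d_a(x, z) <= d_b(y, z) + d_a(x, y), where b is the restriction of a to the
   coordinates on which x and y agree, and d_b(y, A) <= |b| d_T(y, A) by
   homogeneity.  On the at most d_H(x, y) disagreeing coordinates,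
   Cauchy-Schwarz gives d_a(x, y)^2 <= d_H(x, y) sum_{x_i <> y_i} a_i^2; since
   |b|^2 + sum_{x_i <> y_i} a_i^2 <= 1, a second Cauchy-Schwarz yields
   d_a(x, A)^2 <= d_T(y, A)^2 + d_H(x, y), the second claim.
   For the first, take a nearly optimal for x.  Then d_T(x, A) - d_T(y, A) is
   at most d_a(x, y), and for a flip-swap neighbour y at most two coordinates
   differ, so (d_T(x, A)^2 - d_T(y, A)^2)_+^2 <= 8 d_T(x, A)^2 sum_{x_i <> y_i}
   a_i^2 up to an error that vanishes with the approximation.  Summed against
   L(x, .), the right-hand side becomes
   8 d_T(x, A)^2 sum_i a_i^2 sum_{y_i <> x_i} L(x, y) <= 8 R rho(L) d_T(x, A)^2
   by R-stability. *)

Lemma sqr_sum_le_card_mul (R : realDomainType) (I : finType) (S : {pred I})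
    (g : I -> R) :
  (\sum_(i in S) g i) ^+ 2 <= #|S|%:R * \sum_(i in S) g i ^+ 2.
Proof.
have double : 2 * (\sum_(i in S) g i) ^+ 2
    <= \sum_(i in S) \sum_(j in S) (g i ^+ 2 + g j ^+ 2).
  rewrite expr2 big_distrlr /= mulr_sumr; apply: ler_sum => i _.
  rewrite mulr_sumr; apply: ler_sum => j _.
  by have := sqr_ge0 (g i - g j); rewrite sqrrB; lra.
set q := \sum_(i in S) g i ^+ 2.
have inner i : \sum_(j in S) (g i ^+ 2 + g j ^+ 2) = #|S|%:R * g i ^+ 2 + q.
  by rewrite big_split /= sumr_const mulr_natl.
have count : \sum_(i in S) \sum_(j in S) (g i ^+ 2 + g j ^+ 2) = 2 * (#|S|%:R * q).
  under eq_bigr do rewrite inner.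
  by rewrite big_split /= -mulr_sumr sumr_const -mulr_natl -/q; ring.
lra.
Qed.

Lemma sqr_mul_add_le (R : realDomainType) (c t s k s2 : R) :
  0 <= c -> 0 <= t -> 0 <= s -> 0 <= k -> 0 <= s2 -> s ^+ 2 <= k * s2 ->
  (c * t + s) ^+ 2 <= (c ^+ 2 + s2) * (t ^+ 2 + k).
Proof.
move=> c0 t0 s0 k0 s20 sk.
suff cross : 2 * c * t * s <= c ^+ 2 * k + s2 * t ^+ 2 by lra.
have amgm : (2 * c * t * s) ^+ 2 <= (c ^+ 2 * k + s2 * t ^+ 2) ^+ 2.
  have := sqr_ge0 (c ^+ 2 * k - s2 * t ^+ 2).
  have := mulr_ge0 (sqr_ge0 c) (sqr_ge0 t).
  nra.
rewrite -ler_sqr ?nnegrE //; first by rewrite !mulr_ge0.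
by rewrite addr_ge0 // mulr_ge0 ?sqr_ge0.
Qed.

Lemma sqr_max_subr_sqr_le (R : realDomainType) (d e t : R) :
  0 <= d -> 0 <= e -> d - t <= e ->
  Num.max (d ^+ 2 - e ^+ 2) 0 ^+ 2 <= 4 * d ^+ 2 * t ^+ 2.
Proof.
move=> d0 e0 det; have [_|pos] := leP (d ^+ 2 - e ^+ 2) 0.
  by rewrite expr0n /= -mulrA -exprMn mulr_ge0 ?sqr_ge0.
have lt_ed : e < d by rewrite -(ltr_pXn2r (n := 2)) ?nnegrE //; lra.
have t_pos : 0 < t by lra.
have drop : d ^+ 2 - e ^+ 2 <= 2 * d * t.
  have := ler_wpM2r (addr_ge0 d0 e0) det.
  have := ler_wpM2l (ltW t_pos) (ltW lt_ed).
  lra.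
rewrite (_ : 4 * d ^+ 2 * t ^+ 2 = (2 * d * t) ^+ 2); last by ring.
have dt0 : 0 <= 2 * d * t by rewrite !mulr_ge0 // ltW.
by rewrite ler_sqr ?nnegrE // ltW.
Qed.

Lemma ler_of_forall_eps (R : realFieldType) (a b k : R) : 0 <= k ->
  (forall eps, 0 < eps -> eps <= 1 -> a <= b + eps * k) -> a <= b.
Proof.
move=> k0 h; apply/ler_addgt0Pr => e e0.
pose eps := Num.min 1 (e / (k + 1)).
have ek : 0 < e / (k + 1) by rewrite divr_gt0 // ltr_wpDl.
have eps0 : 0 < eps by rewrite lt_min ltr01 ek.
have eps1 : eps <= 1 by rewrite ge_min lexx.
have epsk : eps * k <= e.
  have : eps <= e / (k + 1) by rewrite ge_min lexx orbT.
  rewrite ler_pdivlMr ?ltr_wpDl //; nra.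
by have := h eps eps0 eps1; lra.
Qed.

Section Hypercube.
Variables (R : realType) (n : nat).
Implicit Types (a b : 'I_n -> R) (x y z : cube n) (A : {set cube n})
  (pi : cube n -> R) (L : cube n -> cube n -> R).

Definition disagree x y : {set 'I_n} := [set i | x i != y i].

Lemma d_H_card x y : d_H x y = #|disagree x y|.
Proof.
rewrite /d_H -sum1_card [RHS]big_mkcond /=.
by apply: eq_bigr => i _; rewrite inE; case: (x i != y i).
Qed.

Lemma d_alpha_disagreeE a x y : d_alpha a x y = \sum_(i in disagree x y) a i.
Proof.
rewrite /d_alpha [RHS]big_mkcond /=; apply: eq_bigr => i _; rewrite inE.
by case: (x i != y i); rewrite ?mulr1 ?mulr0.
Qed.

Lemma disagree_flip x i : disagree x (flip x i) = [set i].
Proof.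
apply/setP => k; rewrite !inE ffunE.
by case: (k =P i) => [->|_]; rewrite ?eqxx //; case: (x i).
Qed.

Lemma disagree_swap x i j : x i != x j -> disagree x (swap x i j) = [set i; j].
Proof.
move=> xij; apply/setP => k; rewrite !inE ffunE.
have [->|ki] := eqVneq k i; first by rewrite xij.
have [->|kj] := eqVneq k j; first by rewrite eq_sym xij.
by rewrite eqxx.
Qed.

Lemma flip_swap_d_H_le2 L x y : flip_swap L -> x != y -> 0 < L x y ->
  (d_H x y <= 2)%N.
Proof.
move=> fs xy Lxy; rewrite d_H_card.
case: (fs x y xy Lxy) => [[i ->]|[i [j [xij ->]]]].
  by rewrite disagree_flip cards1.
by rewrite disagree_swap // cards2; case: (i != j).
Qed.

Lemma d_alpha_ge0 a x y : (forall i, 0 <= a i) -> 0 <= d_alpha a x y.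
Proof. by move=> a0; apply: sumr_ge0 => i _; rewrite mulr_ge0. Qed.

Lemma d_alpha_xx a x : d_alpha a x x = 0.
Proof. by rewrite /d_alpha big1 // => i _; rewrite eqxx mulr0. Qed.

Lemma d_alpha_set_le a x A z : (forall i, 0 <= a i) -> z \in A ->
  d_alpha_set a x A <= d_alpha a x z.
Proof.
move=> a0 zA; apply: ge_inf; last by exists z.
by exists 0 => _ [w _ <-]; apply: d_alpha_ge0.
Qed.

Lemma d_alpha_set_ge a x A c : A != finset.set0 ->
  (forall z, z \in A -> c <= d_alpha a x z) -> c <= d_alpha_set a x A.
Proof.
move=> /set0Pn [z zA] h; apply: lb_le_inf; first by exists (d_alpha a x z), z.
by move=> _ [w wA <-]; apply: h.
Qed.

Lemma d_alpha_set_ge0 a x A : A != finset.set0 -> (forall i, 0 <= a i) ->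
  0 <= d_alpha_set a x A.
Proof. by move=> A0 a0; apply: d_alpha_set_ge => // z _; apply: d_alpha_ge0. Qed.

Definition admissible a := (forall i, 0 <= a i) /\ \sum_i a i ^+ 2 <= 1.

Lemma admissibleE a :
  (forall i, 0 <= a i) /\ Num.sqrt (\sum_i a i ^+ 2) <= 1 <-> admissible a.
Proof.
have sum0 : 0 <= \sum_i a i ^+ 2 by apply: sumr_ge0 => i _; apply: sqr_ge0.
by rewrite /admissible -[X in _ <= X]sqrtr1 ler_sqrt.
Qed.

Lemma admissible0 : admissible (fun=> 0).
Proof. by split=> //; rewrite big1 // => i _; rewrite expr0n. Qed.

Lemma admissible_le1 a i : admissible a -> a i <= 1.
Proof.
move=> [a0 a1]; have : a i ^+ 2 <= 1.
  apply: le_trans a1; rewrite (bigD1 i) //= lerDl.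
  by apply: sumr_ge0 => j _; apply: sqr_ge0.
by have := a0 i; nra.
Qed.

Let d_T_values x A := [set d_alpha_set a x A | a in
  [set a : 'I_n -> R | (forall i, 0 <= a i) /\ Num.sqrt (\sum_i a i ^+ 2) <= 1]]%classic.

Lemma has_sup_d_T_values x A : A != finset.set0 -> has_sup (d_T_values x A).
Proof.
move=> /set0Pn [z zA]; split.
  exists (d_alpha_set (fun=> 0) x A), (fun=> 0) => //.
  exact/admissibleE/admissible0.
exists n%:R => _ [a /admissibleE ha <-].
apply: le_trans (d_alpha_set_le x ha.1 zA) _.
rewrite -[n in n%:R]card_ord -sum1_card natr_sum; apply: ler_sum => i _.
by have := admissible_le1 i ha; have := ha.1 i; case: (x i != z i) => /=; lra.
Qed.

Lemma d_alpha_set_le_d_T a x A : A != finset.set0 -> admissible a ->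
  d_alpha_set a x A <= d_T x A.
Proof.
move=> A0 ha; apply: sup_upper_bound; first exact: has_sup_d_T_values.
by exists a => //; apply/admissibleE.
Qed.

Lemma d_T_le x A c : A != finset.set0 ->
  (forall a, admissible a -> d_alpha_set a x A <= c) -> d_T x A <= c.
Proof.
move=> A0 h; apply: ge_sup; first by case: (has_sup_d_T_values x A0).
by move=> _ [a /admissibleE ha <-]; apply: h.
Qed.

Lemma d_T_ge0 x A : A != finset.set0 -> (0 : R) <= d_T x A.
Proof.
move=> A0; apply: le_trans (d_alpha_set_le_d_T x A0 admissible0).
exact: d_alpha_set_ge0.
Qed.

Lemma d_T_approx x A eps : A != finset.set0 -> 0 < eps ->
  exists2 a, admissible a & d_T x A - eps < d_alpha_set a x A.
Proof.
move=> A0 eps0; have [_ [a /admissibleE ha <-] lt_a] :=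
  sup_adherent eps0 (has_sup_d_T_values x A0).
by exists a.
Qed.

Lemma d_T_sqr_le x A c : A != finset.set0 ->
  (forall a, admissible a -> d_alpha_set a x A ^+ 2 <= c) -> d_T x A ^+ 2 <= c.
Proof.
move=> A0 h; have c0 : 0 <= c.
  by apply: le_trans (h _ admissible0); apply: sqr_ge0.
suff : d_T x A <= Num.sqrt c.
  by rewrite -(ler_sqr (d_T_ge0 x A0)) ?nnegrE ?sqrtr_ge0 // sqr_sqrtr.
apply: d_T_le => // a ha.
by rewrite -(ger0_norm (d_alpha_set_ge0 x A0 ha.1)) -sqrtr_sqr ler_sqrt // h.
Qed.

Lemma d_alpha_set_le_norm_mul_d_T b y A : A != finset.set0 ->
  (forall i, 0 <= b i) ->
  d_alpha_set b y A <= Num.sqrt (\sum_i b i ^+ 2) * d_T y A.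
Proof.
move=> A0 b0; have norm0 : 0 <= \sum_i b i ^+ 2.
  by apply: sumr_ge0 => i _; apply: sqr_ge0.
set c := Num.sqrt _; have [c_eq0|c_neq0] := eqVneq c 0.
  have b_eq0 i : b i = 0.
    have : \sum_i b i ^+ 2 = 0 by rewrite -(sqr_sqrtr norm0) -/c c_eq0 expr0n.
    move/(psumr_eq0P (fun j _ => sqr_ge0 (b j)))/(_ i isT)/eqP.
    by rewrite sqrf_eq0 => /eqP.
  move: A0 => /set0Pn [z zA]; rewrite c_eq0 mul0r.
  apply: le_trans (d_alpha_set_le y b0 zA) _.
  by rewrite /d_alpha big1 // => i _; rewrite b_eq0 mul0r.
have c_gt0 : 0 < c by rewrite lt_neqAle eq_sym c_neq0 sqrtr_ge0.
have ha : admissible (fun i => b i / c).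
  split=> [i|]; first by rewrite divr_ge0 // ltW.
  under eq_bigr do rewrite expr_div_n.
  rewrite -mulr_suml sqr_sqrtr // divff //.
  by apply: contraNneq c_neq0 => sum_eq0; rewrite /c sum_eq0 sqrtr0.
rewrite mulrC -ler_pdivrMr //; apply: le_trans (d_alpha_set_le_d_T y A0 ha).
apply: d_alpha_set_ge => // z zA; rewrite ler_pdivrMr //.
apply: le_trans (d_alpha_set_le y b0 zA) _.
rewrite /d_alpha mulr_suml; apply: ler_sum => i _.
by rewrite [X in _ <= X]mulrAC (divfK (lt0r_neq0 c_gt0)).
Qed.

Lemma d_alpha_set_le_restrict a x y A : A != finset.set0 ->
  (forall i, 0 <= a i) ->
  d_alpha_set a x A <=
    d_alpha_set (fun i => if i \in disagree x y then 0 else a i) y A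
    + d_alpha a x y.
Proof.
move=> A0 a0; rewrite -lerBlDr; apply: d_alpha_set_ge => // z zA.
rewrite lerBlDr; apply: le_trans (d_alpha_set_le x a0 zA) _.
rewrite /d_alpha -big_split /=; apply: ler_sum => i _; rewrite inE.
have := a0 i; case: (x i); case: (y i); case: (z i) => /=;
  rewrite ?mulr1 ?mulr0 ?addr0 ?add0r; lra.
Qed.

Lemma d_alpha_set_le_d_T_add a x y A : A != finset.set0 ->
  (forall i, 0 <= a i) ->
  d_alpha_set a x A <=
    Num.sqrt (\sum_(i | i \notin disagree x y) a i ^+ 2) * d_T y A
    + d_alpha a x y.
Proof.
move=> A0 a0; set b := fun i => if i \in disagree x y then 0 else a i.
have b0 i : 0 <= b i by rewrite /b; case: ifP.
have normb : \sum_i b i ^+ 2 = \sum_(i | i \notin disagree x y) a i ^+ 2.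
  rewrite [RHS]big_mkcond; apply: eq_bigr => i _.
  by rewrite /b; case: ifP; rewrite ?expr0n.
apply: le_trans (d_alpha_set_le_restrict x y A0 a0) _.
by rewrite lerD2r -normb; apply: d_alpha_set_le_norm_mul_d_T.
Qed.

Lemma d_alpha_set_sub_le_d_T a x y A : A != finset.set0 -> admissible a ->
  d_alpha_set a x A - d_alpha a x y <= d_T y A.
Proof.
move=> A0 [a0 a1]; rewrite lerBlDr.
apply: le_trans (d_alpha_set_le_d_T_add x y A0 a0) _; rewrite lerD2r.
apply: ler_piMl; first exact: d_T_ge0.
rewrite -sqrtr1 ler_sqrt //; apply: le_trans a1.
rewrite [X in _ <= X](bigID (mem (disagree x y))) /= lerDr.
by apply: sumr_ge0 => i _; apply: sqr_ge0.
Qed.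

Lemma d_T_sqr_sub_le_d_H x y A : A != finset.set0 ->
  d_T x A ^+ 2 - d_T y A ^+ 2 <= (d_H x y)%:R :> R.
Proof.
move=> A0; set T := d_T y A; set k : R := (d_H x y)%:R.
suff : d_T x A ^+ 2 <= T ^+ 2 + k by lra.
apply: d_T_sqr_le => // a [a0 a1]; set D := disagree x y.
set c2 := \sum_(i | i \notin D) a i ^+ 2; set s2 := \sum_(i in D) a i ^+ 2.
have c20 : 0 <= c2 by apply: sumr_ge0 => i _; apply: sqr_ge0.
have s20 : 0 <= s2 by apply: sumr_ge0 => i _; apply: sqr_ge0.
have norm_split : c2 + s2 <= 1.
  by move: a1; rewrite (bigID (mem D)) /= addrC.
have cauchy : d_alpha a x y ^+ 2 <= k * s2.
  by rewrite d_alpha_disagreeE /k d_H_card; apply: sqr_sum_le_card_mul.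
have := sqr_mul_add_le (sqrtr_ge0 c2) (d_T_ge0 y A0) (d_alpha_ge0 x y a0)
  (ler0n _ _) s20 cauchy.
rewrite sqr_sqrtr // => le_sqr.
apply: le_trans (ler_piMl _ norm_split); last by rewrite addr_ge0 ?sqr_ge0.
apply: le_trans le_sqr; rewrite ler_sqr ?nnegrE ?d_alpha_set_ge0 //.
  exact: d_alpha_set_le_d_T_add.
by rewrite addr_ge0 ?d_alpha_ge0 // mulr_ge0 ?sqrtr_ge0 ?d_T_ge0.
Qed.

Lemma sqr_max_d_T_sub_le a x y A eps : A != finset.set0 -> admissible a ->
  (d_H x y <= 2)%N -> 0 < eps -> eps <= 1 ->
  d_T x A - eps < d_alpha_set a x A ->
  Num.max (d_T x A ^+ 2 - d_T y A ^+ 2) 0 ^+ 2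
    <= 4 * d_T x A ^+ 2 * (2 * d_alpha (fun i => a i ^+ 2) x y + 5 * eps).
Proof.
move=> A0 [a0 a1] dH2 eps0 eps1 near_sup.
set s := d_alpha a x y; set q := d_alpha (fun i => a i ^+ 2) x y.
have s0 : 0 <= s by apply: d_alpha_ge0.
have close : d_T x A - (eps + s) <= d_T y A.
  by have := d_alpha_set_sub_le_d_T x y A0 (conj a0 a1); rewrite -/s; lra.
apply: le_trans (sqr_max_subr_sqr_le (d_T_ge0 x A0) (d_T_ge0 y A0) close) _.
apply: ler_wpM2l; first by rewrite mulr_ge0 // sqr_ge0.
have cauchy : s ^+ 2 <= 2 * q.
  rewrite /s /q !d_alpha_disagreeE; apply: le_trans (sqr_sum_le_card_mul _ _) _.
  apply: ler_wpM2r; first by apply: sumr_ge0 => i _; apply: sqr_ge0.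
  by rewrite -d_H_card ler_nat.
have q1 : q <= 1.
  apply: le_trans a1; apply: ler_sum => i _.
  by have := sqr_ge0 (a i); case: (x i != y i); rewrite ?mulr1 ?mulr0.
have s2 : s <= 2 by nra.
nra.
Qed.

Lemma sum_L_d_alpha_sqr_le pi L Rc a x : R_stable pi L Rc -> 0 <= Rc ->
  0 < pi x -> admissible a ->
  \sum_y L x y * d_alpha (fun i => a i ^+ 2) x y <= Rc * mlsi_const pi L.
Proof.
move=> [rho0 stable] Rc0 pix [a0 a1].
have -> : \sum_y L x y * d_alpha (fun i => a i ^+ 2) x y
    = \sum_i a i ^+ 2 * \sum_(y : cube n | y i != x i) L x y.
  under eq_bigr do rewrite /d_alpha mulr_sumr.
  rewrite exchange_big /=; apply: eq_bigr => i _.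
  rewrite mulr_sumr [RHS]big_mkcond /=; apply: eq_bigr => y _.
  by rewrite (eq_sym (y i)); case: (x i != y i); rewrite ?mulr1 ?mulr0 // mulrC.
apply: le_trans (_ : \sum_i a i ^+ 2 * (Rc * mlsi_const pi L) <= _).
  by apply: ler_sum => i _; rewrite ler_wpM2l ?sqr_ge0 ?stable.
by rewrite -mulr_suml ler_piMl // mulr_ge0 // ltW.
Qed.

Lemma Gamma_plus_d_T_sqr_le_add pi L Rc A x eps :
  is_generator L -> flip_swap L -> 0 <= Rc -> R_stable pi L Rc ->
  A != finset.set0 -> 0 < pi x -> 0 < eps -> eps <= 1 ->
  Gamma_plus L (fun z => d_T z A ^+ 2) x <=
    8 * Rc * mlsi_const pi L * d_T x A ^+ 2
    + eps * (20 * d_T x A ^+ 2 * \sum_(y | y != x) L x y).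
Proof.
move=> [L0 _] fs Rc0 stable A0 pix eps0 eps1.
(* Instead of showing that the supremum defining d_T is attained, use an
   eps-optimal weight and let eps -> 0 in [Gamma_plus_d_T_sqr_le]. *)
have [a ha near_sup] := d_T_approx x A0 eps0.
set d := d_T x A; set q := fun y => d_alpha (fun i => a i ^+ 2) x y.
have term y : y != x ->
    Num.max (d ^+ 2 - d_T y A ^+ 2) 0 ^+ 2 * L x y
      <= 4 * d ^+ 2 * (2 * q y + 5 * eps) * L x y.
  move=> yx; have Lxy0 : 0 <= L x y by apply: L0; rewrite eq_sym.
  have [->|Lxy_neq0] := eqVneq (L x y) 0; first by rewrite !mulr0.
  have Lxy_gt0 : 0 < L x y by rewrite lt_neqAle eq_sym Lxy_neq0.
  have xy : x != y by rewrite eq_sym.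
  have dH2 := flip_swap_d_H_le2 fs xy Lxy_gt0.
  by rewrite ler_wpM2r // (sqr_max_d_T_sub_le A0 ha dH2 eps0 eps1 near_sup).
have sum_q : \sum_(y | y != x) L x y * q y <= Rc * mlsi_const pi L.
  rewrite -[X in X <= _](_ : \sum_y L x y * q y = _).
    exact: sum_L_d_alpha_sqr_le.
  by rewrite (bigD1 x) //= /q d_alpha_xx mulr0 add0r.
have regroup : \sum_(y | y != x) 4 * d ^+ 2 * (2 * q y + 5 * eps) * L x y
    = 8 * d ^+ 2 * \sum_(y | y != x) L x y * q y
      + eps * (20 * d ^+ 2 * \sum_(y | y != x) L x y).
  by rewrite !mulr_sumr -big_split /=; apply: eq_bigr => y _; ring.
rewrite /Gamma_plus (bigD1 x) //= subrr maxxx expr0n /= mul0r add0r -/d.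
apply: le_trans (ler_sum _ term) _; rewrite regroup lerD2r.
have := ler_wpM2l (_ : 0 <= 8 * d ^+ 2) sum_q; rewrite mulr_ge0 ?sqr_ge0 //.
lra.
Qed.

Lemma Gamma_plus_d_T_sqr_le pi L Rc A x :
  is_generator L -> flip_swap L -> 0 <= Rc -> R_stable pi L Rc ->
  A != finset.set0 -> 0 < pi x ->
  Gamma_plus L (fun z => d_T z A ^+ 2) x
    <= 8 * Rc * mlsi_const pi L * d_T x A ^+ 2.
Proof.
move=> gen fs Rc0 stable A0 pix.
have out_rate0 : 0 <= \sum_(y | y != x) L x y.
  by apply: sumr_ge0 => y yx; apply: gen.1; rewrite eq_sym.
apply: (ler_of_forall_eps (k := 20 * d_T x A ^+ 2 * \sum_(y | y != x) L x y)).
  by rewrite mulr_ge0 // mulr_ge0 // sqr_ge0.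
by move=> eps; apply: Gamma_plus_d_T_sqr_le_add.
Qed.

End Hypercube.

Theorem lemma6p2 (R : realType) (n : nat) (pi : cube n -> R)
  (L : cube n -> cube n -> R) (Rc : R) :
  is_prob pi -> is_generator L -> reversible pi L -> flip_swap L ->
  0 <= Rc -> R_stable pi L Rc ->
  (forall (A : {set cube n}) (x : cube n), A != finset.set0 -> 0 < pi x ->
     Gamma_plus L (fun z => d_T z A ^+ 2) x
       <= 8 * Rc * mlsi_const pi L * d_T x A ^+ 2) /\
  (forall (x y : cube n) (A : {set cube n}), A != finset.set0 ->
     (d_T x A : R) ^+ 2 - (d_T y A : R) ^+ 2 <= (d_H x y)%:R).
Proof.
move=> _ gen _ fs Rc0 stable; split=> [A x A0 pix|x y A A0].
  exact: Gamma_plus_d_T_sqr_le.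
exact: d_T_sqr_sub_le_d_H.
Qed.
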